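(* Let $k\ge1$ and $n\ge k+1$. Every permutation $\sigma\in\mathcal{S}_{n,k}^{1\prec n}(1324)$ can be written uniquely as $\sigma=\sigma_1\odot(\sigma_2\odot(\cdots\odot\sigma_k))$ where each $\sigma_j$ is a primitive, i.e. $\sigma_j\in\mathcal{S}_{m_j,1}^{1\prec m_j}(1324)$ for some $m_j\ge2$ (and then $m_1+\cdots+m_k=n+k-1$).
   Context: $\mathcal{S}_n(1324)$ denotes the set of permutations of $\{1,\dots,n\}$ (in one-line notation) avoiding the pattern $1324$. For $a,k\ge1$, $\mathcal{S}_{n,k}^{a\prec n}(1324)$ is the set of $\sigma\in\mathcal{S}_n(1324)$ with $\sigma^{-1}(n)-\sigma^{-1}(a)=k$ and $\sigma^{-1}(b)>\sigma^{-1}(n)$ for all $b\in\{1,\dots,a-1\}$. Elements of $\mathcal{S}_{m,1}^{1\prec m}(1324)$ are called primitives; such a permutation has the form $\sigma_1=\pi_1\,1\,m\,\tau_1$. Given a primitive $\sigma_1=\pi_1\,1\,m\,\tau_1$ of size $m$ and $\sigma_2\in\mathcal{S}_\ell(1324)$ of the form $\sigma_2=\pi_2\,1\,\theta_2\,\ell\,\tau_2$ (words possibly empty), the product is $\sigma_1\odot\sigma_2=\widehat{\pi}_2\,\pi_1\,1\,m\,\widehat{\theta}_2\,n\,\widehat{\tau}_2\,\tau_1$, where $n=\ell+m-1$ and hats denote adding $m-1$ to each entry. *)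

(* Permutations of {1..n} in one-line notation are
   represented as sequences of naturals [s : seq nat] with
   [perm_eq s (iota 1 n)]. Positions are 0-based ([index]); only
   differences of positions are used, so this matches the paper. *)
From mathcomp Require Import all_boot.
Set Implicit Arguments. Unset Strict Implicit. Unset Printing Implicit Defensive.

Definition is_perm (n : nat) (s : seq nat) : bool := perm_eq s (iota 1 n).

Definition contains1324 (s : seq nat) : Prop :=
  exists i j l m, [/\ i < j, j < l, l < m & m < size s] /\
    [/\ nth 0 s i < nth 0 s l, nth 0 s l < nth 0 s j & nth 0 s j < nth 0 s m].

Definition avoids1324 (s : seq nat) : Prop := ~ contains1324 s.

Definition S_prec (n k a : nat) (s : seq nat) : Prop :=
  [/\ is_perm n s, avoids1324 s, index n s = index a s + k
    & forall b, 1 <= b < a -> index n s < index b s].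

Definition primitive (m : nat) (s : seq nat) : Prop := S_prec m 1 1 s.

(* The product sigma1 (.) sigma2, where sigma1 = pi1 1 m tau1 has size m
   and sigma2 = pi2 1 theta2 l tau2 has size l:
   result = hat pi2 ++ pi1 ++ [1; m] ++ hat theta2 ++ [n] ++ hat tau2 ++ tau1
   with n = l + m - 1 and hat adding m - 1 to each entry. *)
Definition odot (s1 s2 : seq nat) : seq nat :=
  let m := size s1 in
  let l := size s2 in
  let n := l + m - 1 in
  let i1 := index 1 s1 in
  let pi1 := take i1 s1 in
  let tau1 := drop i1.+2 s1 in
  let j1 := index 1 s2 in
  let jl := index l s2 in
  let pi2 := take j1 s2 in
  let theta2 := take (jl - j1.+1) (drop j1.+1 s2) in
  let tau2 := drop jl.+1 s2 in
  let hat := map (fun x => x + (m - 1)) in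
  hat pi2 ++ pi1 ++ [:: 1; m] ++ hat theta2 ++ [:: n] ++ hat tau2 ++ tau1.

Fixpoint odot_chain (l : seq (seq nat)) : seq nat :=
  match l with
  | [::] => [::]
  | [:: s] => s
  | s :: t => odot s (odot_chain t)
  end.

From mathcomp Require Import all_boot zify.
Set Implicit Arguments. Unset Strict Implicit. Unset Printing Implicit Defensive.

(* Let sigma be in S_{n,k}^{1<n}(1324) with k >= 2 and let m be the entry
   right after 1.  Avoiding 1324 forces the entries between m and n to exceed
   m, and splits the entries before 1 (resp. after n) into a block above m
   followed by a block below m.  Hence sigma = sigma1 (.) sigma2, where sigma1
   (the entries <= m) is a primitive of size m and sigma2 (the entries >= m,
   shifted down by m - 1) lies in S_{n-m+1,k-1}^{1<n-m+1}(1324).  Conversely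
   the product of a primitive with an element of S_{l,k}^{1<l}(1324) avoids
   1324, since an occurrence of 1324 mixing entries below and above m would
   already occur in one of the factors; and both factors can be read back
   from the product in the same way. *)

(** * Occurrences of 1324 as subsequences *)

Lemma subseq_nth_drop (s w : seq nat) i j : j <= i < size s ->
  subseq w (drop i.+1 s) -> subseq (nth 0 s i :: w) (drop j s).
Proof.
case/andP=> le_ji lt_is sub_w; apply: (@subseq_trans _ (drop i s)).
  by rewrite (drop_nth 0) //= eqxx.
by rewrite -(subnK le_ji) -drop_drop drop_subseq.
Qed.

Lemma subseq_cons_nth (x : nat) (w s : seq nat) : subseq (x :: w) s ->
  exists2 i, i < size s & nth 0 s i = x /\ subseq w (drop i.+1 s).
Proof.
elim: s => //= y s IH; case: eqP => [<- sub_w | _ /IH [i lt_is [nth_i sub_w]]].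
  by exists 0; rewrite //= drop0.
by exists i.+1.
Qed.

Lemma subseq_cons_drop (x : nat) (w s : seq nat) j : subseq (x :: w) (drop j s) ->
  exists2 i, j <= i < size s & nth 0 s i = x /\ subseq w (drop i.+1 s).
Proof.
move=> /subseq_cons_nth [i]; rewrite size_drop nth_drop drop_drop => lt_i [nth_i sub_w].
by exists (j + i); [lia | rewrite addSn [i + j]addnC in sub_w].
Qed.

Lemma contains1324P s : contains1324 s <->
  exists a b c d : nat, subseq [:: a; b; c; d] s /\ [/\ a < c, c < b & b < d].
Proof.
split=> [[i [j [l [q [[ij jl lq qs] pat]]]]] | [a [b [c [d [sub_s pat]]]]]].
  exists (nth 0 s i), (nth 0 s j), (nth 0 s l), (nth 0 s q); split=> //.
  rewrite -[s in subseq _ s]drop0; apply: subseq_nth_drop; first lia.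
  apply: subseq_nth_drop; first lia.
  apply: subseq_nth_drop; first lia.
  by apply: subseq_nth_drop; rewrite ?sub0seq //; lia.
move: sub_s pat; rewrite -[s in subseq _ s]drop0.
case/subseq_cons_drop=> i /andP [_ lt_is] [<- /subseq_cons_drop [j /andP [ij _] [<-]]].
case/subseq_cons_drop=> l /andP [jl _] [<- /subseq_cons_drop [q /andP [lq qs] [<- _]]] pat.
by exists i, j, l, q.
Qed.

Lemma contains1324_subseq s t : subseq s t -> contains1324 s -> contains1324 t.
Proof.
move=> sub_st /contains1324P [a [b [c [d [sub_s pat]]]]].
by apply/contains1324P; exists a, b, c, d; split=> //; apply: subseq_trans sub_st.
Qed.

Lemma contains1324_map f s : {mono f : x y / x < y} ->
  contains1324 (map f s) <-> contains1324 s.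
Proof.
move=> f_mono; split=> /contains1324P [a [b [c [d [sub_s pat]]]]]; apply/contains1324P.
  move: pat; case/subseqP: sub_s => msk _; rewrite -map_mask.
  case E: (mask msk s) => [|a' [|b' [|c' [|d' []]]]] // [-> -> -> ->].
  rewrite !f_mono => pat; exists a', b', c', d'; split=> //.
  by rewrite -E mask_subseq.
exists (f a), (f b), (f c), (f d); rewrite !f_mono; split=> //.
exact: (map_subseq f sub_s).
Qed.

(** * Merging around a pivot *)

Lemma subseq_cat_split (w s1 s2 : seq nat) : subseq w (s1 ++ s2) ->
  exists w1 w2, [/\ w = w1 ++ w2, subseq w1 s1 & subseq w2 s2].
Proof.
case/subseqP=> msk size_msk ->; rewrite size_cat in size_msk.
exists (mask (take (size s1) msk) s1), (mask (drop (size s1) msk) s2).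
by rewrite -mask_cat ?cat_take_drop ?mask_subseq // size_takel // size_msk leq_addr.
Qed.

Lemma subseq_cat_skipl (p : pred nat) x (w P Q : seq nat) :
  all (predC p) P -> p x -> subseq (x :: w) (P ++ Q) -> subseq (x :: w) Q.
Proof.
elim: P => //= y P IH /andP [npy nP] px; case: eqP => [eq_xy | _ /IH]; last exact.
by rewrite -eq_xy px in npy.
Qed.

Lemma subseq_cat_skipr (p : pred nat) x (w P Q : seq nat) :
  all (predC p) Q -> p x -> subseq (rcons w x) (P ++ Q) -> subseq (rcons w x) P.
Proof.
rewrite -all_rev -[subseq _ (P ++ Q)]subseq_rev -[subseq _ P]subseq_rev.
by rewrite rev_cat rev_rcons; exact: subseq_cat_skipl.
Qed.

Lemma filter_pred_nil (p : pred nat) s : all (predC p) s -> filter p s = [::].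
Proof. by rewrite all_predC has_filter negbK => /eqP. Qed.

Section Merge.

Variables (m : nat) (P Q R D : seq nat).
Hypotheses (bigP : all (fun x => m < x) P) (bigR : all (fun x => m < x) R).
Hypotheses (smallQ : all (fun x => x < m) Q) (smallD : all (fun x => x < m) D).

Let s := P ++ Q ++ m :: R ++ D.

Lemma filter_merge_ge : filter (fun x => m <= x) s = P ++ m :: R.
Proof.
have bigE (X : seq nat) : all (fun x => m < x) X -> filter (fun x => m <= x) X = X.
  by move=> bigX; apply/all_filterP; apply: sub_all bigX => x /ltnW.
have smallE (X : seq nat) : all (fun x => x < m) X -> filter (fun x => m <= x) X = [::].
  by move=> smallX; apply: filter_pred_nil; apply: sub_all smallX => x /=; rewrite -ltnNge.
by rewrite /s !filter_cat /= leqnn filter_cat bigE // smallE // bigE // smallE // cats0.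
Qed.

Lemma filter_merge_le : filter (fun x => x <= m) s = Q ++ m :: D.
Proof.
have bigE (X : seq nat) : all (fun x => m < x) X -> filter (fun x => x <= m) X = [::].
  by move=> bigX; apply: filter_pred_nil; apply: sub_all bigX => x /=; rewrite -ltnNge.
have smallE (X : seq nat) : all (fun x => x < m) X -> filter (fun x => x <= m) X = X.
  by move=> smallX; apply/all_filterP; apply: sub_all smallX => x /ltnW.
by rewrite /s !filter_cat /= leqnn filter_cat bigE // smallE // bigE // smallE.
Qed.

(* A subsequence of s starting below m and ending above m takes its entries
   below m from Q and its entries above m from m :: R. *)
Lemma merge_mixed_occurrence a b c d : subseq [:: a; b; c; d] s -> a < m <= d ->
  a < c -> c < b -> b < d -> contains1324 (P ++ m :: R) \/ contains1324 (Q ++ m :: D).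
Proof.
move=> sub_s /andP [am md] ac cb bd.
have inQ x (u : seq nat) : x < m -> subseq (x :: u) (P ++ Q) -> subseq (x :: u) Q.
  move=> xm; apply: (subseq_cat_skipl (p := fun y => y < m)) => //.
  by apply: sub_all bigP => y /=; lia.
have inR (u : seq nat) : subseq (rcons u d) (R ++ D) -> subseq (rcons u d) R.
  apply: (subseq_cat_skipr (p := fun y => m <= y)) => //.
  by apply: sub_all smallD => y /=; lia.
have allQ (w : seq nat) : subseq w Q -> all (fun y => y < m) w.
  by move/mem_subseq=> sub_w; apply/allP=> y /sub_w; apply: (allP smallQ).
have allR (w : seq nat) : subseq w R -> all (fun y => m < y) w.
  by move/mem_subseq=> sub_w; apply/allP=> y /sub_w; apply: (allP bigR).
move: sub_s; rewrite /s catA => /subseq_cat_split [w1 [w2 [Ew sub1 sub2]]].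
case: w1 Ew sub1 => [|x1 [|x2 [|x3 [|x4 [|x5 w1]]]]] /= Ew sub1.
- by move: sub2; rewrite -Ew /= (ltn_eqF am) => /(inR [:: a; b; c]) /allR /=; lia.
- case: Ew sub2 sub1 => <- <- /=; case: eqP => [bm /(inR [:: c]) /allR /= | _ sub2 _].
    lia.
  have /allR /= big_bcd := inR [:: b; c] sub2; left; apply/contains1324P.
  exists m, b, c, d; split; last by split; lia.
  by apply: subseq_trans (suffix_subseq P _); rewrite /= eqxx (inR [:: b; c]).
- case: Ew sub2 sub1 => <- <- <- /= sub2 /(inQ _ _ am) /allQ /= small_ab.
  have cm : c < m by lia.
  by move: sub2; rewrite (ltn_eqF cm) => /(inR [:: c]) /allR /=; lia.
- case: Ew sub2 sub1 => <- <- <- <- _ /(inQ _ _ am) subQ.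
  have /= small_abc := allQ _ subQ; right; apply/contains1324P.
  exists a, b, c, m; split; last by split; lia.
  by apply: (@cat_subseq _ [:: a; b; c] [:: m] _ _ subQ); rewrite sub1seq mem_head.
- by case: Ew sub1 => <- <- <- <- _ /(inQ _ _ am) /allQ /=; lia.
- by case: Ew.
Qed.

Lemma avoids1324_merge :
  avoids1324 (P ++ m :: R) -> avoids1324 (Q ++ m :: D) -> avoids1324 s.
Proof.
move=> avPR avQD /contains1324P [a [b [c [d [sub_s [ac cb bd]]]]]].
have [ma | am] := leqP m a.
  apply: avPR; apply/contains1324P; exists a, b, c, d; split=> //.
  by rewrite -filter_merge_ge subseq_filter sub_s /= andbT; lia.
have [dm | md] := ltnP d m.
  apply: avQD; apply/contains1324P; exists a, b, c, d; split=> //.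
  by rewrite -filter_merge_le subseq_filter sub_s /= andbT; lia.
have am_md : a < m <= d by rewrite am md.
by case: (merge_mixed_occurrence sub_s am_md ac cb bd) => [/avPR | /avQD].
Qed.

End Merge.

Lemma is_perm_shape_range n (X T Y : seq nat) :
  is_perm n (X ++ 1 :: T ++ n :: Y) -> all (fun x => 1 < x < n) (X ++ T ++ Y).
Proof.
move=> perm_s; set L := X ++ T ++ Y.
have perm_L : perm_eq (X ++ 1 :: T ++ n :: Y) (1 :: n :: L).
  by apply/permP=> p; rewrite !count_cat /= !count_cat /=; lia.
have /and3P [one_L n_L _] : uniq (1 :: n :: L).
  by rewrite -(perm_uniq perm_L) (perm_uniq perm_s) iota_uniq.
apply/allP=> x x_L; have := perm_mem perm_s x.
rewrite (perm_mem perm_L) mem_iota !inE x_L !orbT.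
have x1 : x != 1 by apply: contraNneq one_L => <-; rewrite inE x_L orbT.
have xn : x != n by apply: contraNneq n_L => <-.
lia.
Qed.

Lemma S_prec1_shape n k s : 0 < k -> S_prec n k 1 s ->
  1 < n /\ exists X T Y, [/\ s = X ++ 1 :: T ++ n :: Y, size T = k.-1
                           & all (fun x => 1 < x < n) (X ++ T ++ Y)].
Proof.
move=> k_gt0 [perm_s _ idx_n _].
have size_s : size s = n by rewrite (perm_size perm_s) size_iota.
have mem_s x : (x \in s) = (0 < x <= n) by rewrite (perm_mem perm_s) mem_iota add1n ltnS.
have n_gt0 : 0 < n by move: idx_n; rewrite -size_s; case: (s) => //=; lia.
have n_ne1 : n != 1 by apply/eqP=> n1; move: idx_n; rewrite n1; lia.
have n_gt1 : 1 < n by lia.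
split=> //; set i := index 1 s in idx_n.
have lt_ik : i + k < size s by rewrite -idx_n index_mem mem_s n_gt0 leqnn.
have shape_s : s = take i s ++ 1 :: take k.-1 (drop i.+1 s) ++ n :: drop (i + k).+1 s.
  rewrite -{1}(cat_take_drop i s) (drop_nth 0) ?nth_index ?mem_s //; last lia.
  rewrite -{1}(cat_take_drop k.-1 (drop i.+1 s)) drop_drop.
  have -> : k.-1 + i.+1 = index n s by lia.
  have n_s : n \in s by rewrite mem_s n_gt0 leqnn.
  by rewrite [drop (index n s) s](drop_nth 0) ?index_mem ?nth_index ?idx_n.
exists (take i s), (take k.-1 (drop i.+1 s)), (drop (i + k).+1 s).
set X := take i s in shape_s *; set T := take _ _ in shape_s *; set Y := drop _ _ in shape_s *.
split=> //; first by rewrite size_takel // size_drop; lia.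
by apply: is_perm_shape_range; rewrite -shape_s.
Qed.

Lemma S_prec1_of_shape n (X T Y : seq nat) :
  is_perm n (X ++ 1 :: T ++ n :: Y) -> avoids1324 (X ++ 1 :: T ++ n :: Y) ->
  S_prec n (size T).+1 1 (X ++ 1 :: T ++ n :: Y).
Proof.
move=> perm_s av_s; split=> //; last by move=> b; lia.
have := is_perm_shape_range perm_s; rewrite !all_cat => /and3P [rangeX rangeT _].
have n_gt1 : 1 < n.
  by have := perm_size perm_s; rewrite size_iota size_cat /= size_cat /=; lia.
have one_X : 1 \notin X by apply/negP=> /(allP rangeX); lia.
have n_X : n \notin X by apply/negP=> /(allP rangeX); lia.
have n_T : n \notin T by apply/negP=> /(allP rangeT); lia.
rewrite !index_cat (negbTE one_X) (negbTE n_X) /= (ltn_eqF n_gt1).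
by rewrite index_cat (negbTE n_T) /= eqxx; lia.
Qed.

(** * The product and its factors *)

Definition hat c : seq nat -> seq nat := map (fun x => x + c).

Lemma hat_iota c a k : hat c (iota a k) = iota (a + c) k.
Proof. by rewrite addnC iotaDl; apply: eq_map => x; rewrite addnC. Qed.

Lemma hatK c : cancel (hat c) (map (fun x => x - c)).
Proof. by move=> s; rewrite -map_comp -[RHS]map_id; apply: eq_map => x /=; rewrite addnK. Qed.

Lemma hat_subK c (X : seq nat) : all (fun x => c <= x) X -> hat c (map (fun x => x - c) X) = X.
Proof.
move=> c_X; rewrite /hat -map_comp -[RHS]map_id.
by apply/eq_in_map=> x /(allP c_X) /=; apply: subnK.
Qed.

Lemma contains1324_hat c s : contains1324 (hat c s) <-> contains1324 s.
Proof. by apply: contains1324_map => x y; rewrite ltn_add2r. Qed.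

Lemma perm_iota_pivot m l : 0 < m ->
  perm_eq (iota 1 m ++ iota m l) (m :: iota 1 (l + m - 1)).
Proof.
case: m => // m _; rewrite (_ : l + m.+1 - 1 = m + l); last lia.
by rewrite -[X in iota 1 X]addn1 !iotaD add1n -catA perm_catCA.
Qed.

Lemma perm_merge m (P Q R D : seq nat) :
  perm_eq (m :: P ++ Q ++ m :: R ++ D) ((Q ++ m :: D) ++ P ++ m :: R).
Proof. by apply/permP=> p; rewrite /= !count_cat /= !count_cat; lia. Qed.

Definition pivot (s : seq nat) : nat := nth 0 s (index 1 s).+1.
Definition lfactor (s : seq nat) : seq nat := filter (fun x => x <= pivot s) s.
Definition rfactor (s : seq nat) : seq nat :=
  map (fun x => x - (pivot s - 1)) (filter (fun x => pivot s <= x) s).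

Lemma pivot_shape (X Y : seq nat) m : 1 \notin X -> pivot (X ++ 1 :: m :: Y) = m.
Proof.
by move=> one_X; rewrite /pivot index_cat (negbTE one_X) /= addn0 nth_cat ltnNge leqnSn subSnn.
Qed.

Lemma drop_size_addn_cat (s1 s2 : seq nat) k : drop (size s1 + k) (s1 ++ s2) = drop k s2.
Proof. by rewrite drop_cat ltnNge leq_addr addKn. Qed.

Section Product.

Variables (m l : nat) (A B C D T : seq nat).
Hypotheses (m_gt1 : 1 < m) (l_gt1 : 1 < l).
Hypotheses (rangeB : all (fun x => 1 < x < m) B) (rangeD : all (fun x => 1 < x < m) D).
Hypotheses (rangeA : all (fun x => 1 < x < l) A) (rangeT : all (fun x => 1 < x < l) T)
           (rangeC : all (fun x => 1 < x < l) C).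
Let s1 := B ++ 1 :: m :: D.
Let s2 := A ++ 1 :: T ++ l :: C.
Hypotheses (perm_s1 : is_perm m s1) (perm_s2 : is_perm l s2).
Let n := l + m - 1.

Lemma odot_shape :
  odot s1 s2 = hat (m - 1) A ++ B ++ 1 :: m :: hat (m - 1) T ++ n :: hat (m - 1) C ++ D.
Proof.
have size_s1 : size s1 = m by rewrite (perm_size perm_s1) size_iota.
have size_s2 : size s2 = l by rewrite (perm_size perm_s2) size_iota.
have one_B : 1 \notin B by apply/negP=> /(allP rangeB); rewrite ltnn.
have one_A : 1 \notin A by apply/negP=> /(allP rangeA); rewrite ltnn.
have l_A : l \notin A by apply/negP=> /(allP rangeA); rewrite ltnn andbF.
have l_T : l \notin T by apply/negP=> /(allP rangeT); rewrite ltnn andbF.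
have idx1_s1 : index 1 s1 = size B by rewrite index_cat (negbTE one_B) /= addn0.
have idx1_s2 : index 1 s2 = size A by rewrite index_cat (negbTE one_A) /= addn0.
have idxl_s2 : index l s2 = size A + (size T).+1.
  by rewrite index_cat (negbTE l_A) /= (ltn_eqF l_gt1) index_cat (negbTE l_T) /= eqxx addn0.
rewrite /odot size_s1 size_s2 idx1_s1 idx1_s2 idxl_s2 !take_size_cat //.
rewrite -[(size A).+1]addn1 -[(size B).+2]addn2 -addnS !drop_size_addn_cat /= !drop0.
rewrite subnDl [(size T).+1 - 1]subSS subn0 take_size_cat //.
by rewrite -[(size T).+1]addn1 drop_size_addn_cat /= drop0.
Qed.

Lemma hat_right_factor : hat (m - 1) s2 = hat (m - 1) A ++ m :: hat (m - 1) T ++ n :: hat (m - 1) C.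
Proof.
have m_ge1 := ltnW m_gt1.
by rewrite /hat !map_cat /= map_cat /= subnKC // addnBA.
Qed.

Lemma odot_merge_shape : odot s1 s2 =
  hat (m - 1) A ++ (B ++ [:: 1]) ++ m :: (hat (m - 1) T ++ n :: hat (m - 1) C) ++ D.
Proof. by rewrite odot_shape -!catA. Qed.

Let above_pivot (X : seq nat) :
  all (fun x => 1 < x < l) X -> all (fun x => m < x) (hat (m - 1) X).
Proof. by move=> rangeX; rewrite all_map; apply: sub_all rangeX => x /=; lia. Qed.

Let big_A : all (fun x => m < x) (hat (m - 1) A).
Proof. exact: above_pivot. Qed.

Let big_TC : all (fun x => m < x) (hat (m - 1) T ++ n :: hat (m - 1) C).
Proof.
have m_lt_n : m < n by rewrite /n; lia.
by rewrite all_cat /= m_lt_n !above_pivot.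
Qed.

Let small_B1 : all (fun x => x < m) (B ++ [:: 1]).
Proof. by rewrite all_cat /= m_gt1 !andbT; apply: sub_all rangeB => x /andP []. Qed.

Let small_D : all (fun x => x < m) D.
Proof. by apply: sub_all rangeD => x /andP []. Qed.

Lemma is_perm_odot : is_perm n (odot s1 s2).
Proof.
have perm_hat_right_factor : perm_eq (hat (m - 1) s2) (iota m l).
  by rewrite -[X in iota X l](subnKC (ltnW m_gt1)) -hat_iota; apply: perm_map.
rewrite /is_perm -(perm_cons m); apply: perm_trans (perm_iota_pivot l (ltnW m_gt1)).
rewrite odot_merge_shape; apply: perm_trans (perm_merge _ _ _ _ _) _.
by rewrite -[(B ++ _) ++ m :: D]catA -hat_right_factor; apply: perm_cat.
Qed.

Lemma avoids1324_odot : avoids1324 s1 -> avoids1324 s2 -> avoids1324 (odot s1 s2).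
Proof.
move=> av_s1 av_s2; rewrite odot_merge_shape.
apply: (avoids1324_merge big_A big_TC small_B1 small_D); last by rewrite -catA.
by rewrite -hat_right_factor => /contains1324_hat.
Qed.

Lemma S_prec_odot : avoids1324 s1 -> avoids1324 s2 -> S_prec n (size T).+2 1 (odot s1 s2).
Proof.
move=> av_s1 av_s2; move: is_perm_odot (avoids1324_odot av_s1 av_s2).
rewrite odot_shape catA -(size_map (fun x => x + (m - 1)) T).
exact: (@S_prec1_of_shape n (hat (m - 1) A ++ B) (m :: hat (m - 1) T)).
Qed.

Lemma pivot_odot : pivot (odot s1 s2) = m.
Proof.
have one_A : 1 \notin hat (m - 1) A.
  by apply/negP=> /(allP big_A); rewrite ltnNge ltnW.
have one_B : 1 \notin B by apply/negP=> /(allP rangeB); rewrite ltnn.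
by rewrite odot_shape catA pivot_shape // mem_cat negb_or one_A.
Qed.

Lemma lfactor_odot : lfactor (odot s1 s2) = s1.
Proof.
rewrite /lfactor pivot_odot odot_merge_shape.
by rewrite (filter_merge_le big_A big_TC small_B1 small_D) -catA.
Qed.

Lemma rfactor_odot : rfactor (odot s1 s2) = s2.
Proof.
rewrite /rfactor pivot_odot odot_merge_shape.
by rewrite (filter_merge_ge big_A big_TC small_B1 small_D) -hat_right_factor hatK.
Qed.

End Product.

Lemma odot_spec m l k (s1 s2 : seq nat) : primitive m s1 -> 0 < k -> S_prec l k 1 s2 ->
  [/\ S_prec (l + m - 1) k.+1 1 (odot s1 s2), lfactor (odot s1 s2) = s1
    & rfactor (odot s1 s2) = s2].
Proof.
move=> prim_s1 k_gt0 S_s2.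
have [m_gt1 [B [T1 [D [def_s1 /size0nil T1_nil rangeBD]]]]] := S_prec1_shape (ltn0Sn 0) prim_s1.
have [l_gt1 [A [T [C [def_s2 size_T rangeATC]]]]] := S_prec1_shape k_gt0 S_s2.
move: rangeBD rangeATC; rewrite T1_nil !all_cat => /andP [rangeB rangeD] /and3P [rangeA rangeT rangeC].
case: prim_s1 S_s2 => perm_s1 av_s1 _ _ [perm_s2 av_s2 _ _].
rewrite {}def_s1 {}def_s2 {}T1_nil /= in perm_s1 av_s1 perm_s2 av_s2 *.
split; [| exact: lfactor_odot | exact: rfactor_odot].
by rewrite -(prednK k_gt0) -size_T; apply: S_prec_odot.
Qed.

(** * Factorization at the pivot *)

Lemma notin_uniq_cat (x : nat) (P Q : seq nat) : uniq (P ++ x :: Q) -> x \notin P ++ Q.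
Proof. by rewrite -cat1s uniq_catCA cat1s => /andP []. Qed.

Lemma filter_threshold_split m (X : seq nat) : m \notin X ->
  (forall x y, subseq [:: x; y] X -> x < m -> y < m) ->
  X = filter (fun x => m < x) X ++ filter (fun x => x < m) X.
Proof.
elim: X => //= x X IH; rewrite inE negb_or => /andP [m_x m_X] small_up.
have {}IH := IH m_X (fun y z sub => small_up y z (subseq_trans sub (subseq_cons X x))).
case: (ltngtP m x) => [m_lt_x | x_lt_m | m_eq_x]; last by rewrite m_eq_x eqxx in m_x.
  by rewrite /= -IH.
have small_X : all (fun y => y < m) X.
  by apply/allP=> y y_X; apply: (small_up x) => //=; rewrite eqxx sub1seq.
rewrite filter_pred_nil ?(all_filterP small_X) //.
by apply: sub_all small_X => y /=; rewrite -leqNgt => /ltnW.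
Qed.

Section PivotSplit.

Variables (n m : nat) (X T Y : seq nat).
Hypotheses (m_gt1 : 1 < m) (m_lt_n : m < n).
Hypotheses (m_X : m \notin X) (m_T : m \notin T) (m_Y : m \notin Y).
Hypotheses (rangeX : all (fun x => 1 < x < n) X) (rangeT : all (fun x => 1 < x < n) T)
           (rangeY : all (fun x => 1 < x < n) Y).
Let s := X ++ 1 :: m :: T ++ n :: Y.
Hypothesis av_s : avoids1324 s.

Let no1324 a b c d : subseq [:: a; b; c; d] s -> a < c -> c < b -> b < d -> False.
Proof. by move=> sub_s ac cb bd; apply: av_s; apply/contains1324P; exists a, b, c, d. Qed.

Lemma mid_above_pivot : all (fun x => m < x) T.
Proof.
apply/allP=> t t_T; have /andP [t_gt1 t_lt_n] := allP rangeT t t_T.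
rewrite ltn_neqAle eq_sym (contraNneq _ m_T) => [|<-] //=; rewrite leqNgt.
apply/negP=> t_lt_m; apply: (@no1324 1 m t n) => //.
apply: subseq_trans (suffix_subseq X _); rewrite /= eqxx.
by apply: (@cat_subseq _ [:: t] [:: n]); rewrite sub1seq ?mem_head.
Qed.

Lemma pivot_split_prefix : X = filter (fun x => m < x) X ++ filter (fun x => x < m) X.
Proof.
apply: (filter_threshold_split m_X) => x y sub_xy x_lt_m.
have y_X : y \in X by apply: (mem_subseq sub_xy); rewrite !inE eqxx orbT.
have /andP [_ y_lt_n] := allP rangeX y y_X.
have y_ne_m : y != m by apply: contraNneq m_X => <-.
rewrite ltnNge leq_eqVlt eq_sym negb_or y_ne_m /=; apply/negP=> m_lt_y.
apply: (@no1324 x y m n) => //; apply: (@cat_subseq _ [:: x; y]) => //.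
by rewrite /= (gtn_eqF m_gt1) eqxx sub1seq mem_cat mem_head orbT.
Qed.

Lemma pivot_split_suffix : Y = filter (fun x => m < x) Y ++ filter (fun x => x < m) Y.
Proof.
apply: (filter_threshold_split m_Y) => x y sub_xy x_lt_m.
have x_Y : x \in Y by apply: (mem_subseq sub_xy); rewrite inE eqxx.
have y_Y : y \in Y by apply: (mem_subseq sub_xy); rewrite !inE eqxx orbT.
have /andP [x_gt1 _] := allP rangeY x x_Y.
have y_ne_m : y != m by apply: contraNneq m_Y => <-.
rewrite ltnNge leq_eqVlt eq_sym negb_or y_ne_m /=; apply/negP=> m_lt_y.
apply: (@no1324 1 m x y) => //.
apply: subseq_trans (suffix_subseq X _); rewrite /= eqxx -[n :: Y]cat1s catA.
exact: subseq_trans sub_xy (suffix_subseq _ _).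
Qed.

End PivotSplit.

Lemma S_prec_pivot_shape n k s : 1 < k -> S_prec n k 1 s ->
  exists m A B C D T,
    [/\ s = A ++ B ++ 1 :: m :: T ++ n :: C ++ D, (size T).+2 = k, 1 < m < n,
        all (fun x => m < x < n) (A ++ T ++ C) & all (fun x => 1 < x < m) (B ++ D)].
Proof.
move=> k_gt1 S_s; have [perm_s av_s _ _] := S_s.
have [n_gt1 [X [T' [Y [def_s size_T' rangeXTY]]]]] := S_prec1_shape (ltnW k_gt1) S_s.
case: T' def_s size_T' rangeXTY => [|m T] def_s /= size_T; first lia.
rewrite all_cat /= all_cat => /and4P [rangeX /andP [m_gt1 m_lt_n] rangeT rangeY].
have m_L : m \notin (X ++ [:: 1]) ++ T ++ n :: Y.
  by apply: notin_uniq_cat; rewrite -catA -def_s (perm_uniq perm_s) iota_uniq.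
have m_X : m \notin X by apply: contra m_L => m_X; rewrite !mem_cat m_X.
have m_T : m \notin T by apply: contra m_L => m_T; rewrite !mem_cat m_T orbT.
have m_Y : m \notin Y by apply: contra m_L => m_Y; rewrite !mem_cat !in_cons m_Y !orbT.
rewrite {}def_s in av_s *.
have big_T : all (fun x => m < x) T by apply: mid_above_pivot av_s.
have split_X : X = filter (fun x => m < x) X ++ filter (fun x => x < m) X.
  exact: pivot_split_prefix av_s.
have split_Y : Y = filter (fun x => m < x) Y ++ filter (fun x => x < m) Y.
  exact: pivot_split_suffix av_s.
exists m, (filter (fun x => m < x) X), (filter (fun x => x < m) X),
  (filter (fun x => m < x) Y), (filter (fun x => x < m) Y), T.
split; first by rewrite {1}split_X {1}split_Y -catA.
- lia.
- by rewrite m_gt1.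
- rewrite !all_cat !all_filter; apply/and3P; split.
  + by apply: sub_all rangeX => x /andP [_ x_lt_n]; apply/implyP=> ->.
  + by apply/allP=> x x_T; rewrite (allP big_T) //; case/andP: (allP rangeT x x_T).
  + by apply: sub_all rangeY => x /andP [_ x_lt_n]; apply/implyP=> ->.
- rewrite all_cat !all_filter; apply/andP; split.
  + by apply: sub_all rangeX => x /andP [x_gt1 _]; apply/implyP=> ->; rewrite x_gt1.
  + by apply: sub_all rangeY => x /andP [x_gt1 _]; apply/implyP=> ->; rewrite x_gt1.
Qed.

Lemma filter_iota_le m n : m <= n -> filter (fun x => x <= m) (iota 1 n) = iota 1 m.
Proof.
move=> le_mn; rewrite -(subnKC le_mn) iotaD filter_cat.
rewrite (filter_pred_nil (s := iota (1 + m) _)) ?cats0.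
  by apply/all_filterP/allP=> x; rewrite mem_iota; lia.
by apply/allP=> x; rewrite mem_iota /=; lia.
Qed.

Lemma filter_iota_ge m n : 0 < m <= n ->
  filter (fun x => m <= x) (iota 1 n) = iota m (n - m + 1).
Proof.
move=> range_m; rewrite [X in iota 1 X](_ : n = m.-1 + (n - m + 1)); last lia.
rewrite iotaD filter_cat filter_pred_nil; last by apply/allP=> x; rewrite mem_iota /=; lia.
rewrite /= (_ : 1 + m.-1 = m); last lia.
by apply/all_filterP/allP=> x; rewrite mem_iota; lia.
Qed.

Section Factorization.

Variables (n m : nat) (A B C D T : seq nat).
Hypotheses (m_gt1 : 1 < m) (m_lt_n : m < n).
Hypotheses (rangeA : all (fun x => m < x < n) A) (rangeT : all (fun x => m < x < n) T)
           (rangeC : all (fun x => m < x < n) C).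
Hypotheses (rangeB : all (fun x => 1 < x < m) B) (rangeD : all (fun x => 1 < x < m) D).
Let s := A ++ B ++ 1 :: m :: T ++ n :: C ++ D.
Hypothesis perm_s : is_perm n s.
Let l := n - m + 1.
Let unhat := map (fun x => x - (m - 1)).
Let s1 := B ++ 1 :: m :: D.
Let s2 := unhat A ++ 1 :: unhat T ++ l :: unhat C.

Let add_l : l + (m - 1) = n. Proof. by rewrite /l; lia. Qed.
Let add_1 : 1 + (m - 1) = m. Proof. by rewrite subnKC // ltnW. Qed.

Let range_unhat (X : seq nat) :
  all (fun x => m < x < n) X -> all (fun x => 1 < x < l) (unhat X).
Proof. by move=> rangeX; rewrite all_map; apply: sub_all rangeX => x /=; rewrite /l; lia. Qed.

Let unhatK (X : seq nat) :
  all (fun x => m < x < n) X -> map (fun x => x + (m - 1)) (unhat X) = X.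
Proof. by move=> rangeX; apply: hat_subK; apply: sub_all rangeX => x /=; lia. Qed.

Let merge_s : s = A ++ (B ++ [:: 1]) ++ m :: (T ++ n :: C) ++ D.
Proof. by rewrite /s -!catA. Qed.

Let big (X : seq nat) : all (fun x => m < x < n) X -> all (fun x => m < x) X.
Proof. by apply: sub_all => x /andP []. Qed.

Let small (X : seq nat) : all (fun x => 1 < x < m) X -> all (fun x => x < m) X.
Proof. by apply: sub_all => x /andP []. Qed.

Let big_TC : all (fun x => m < x) (T ++ n :: C).
Proof. by rewrite all_cat /= m_lt_n !big. Qed.

Let small_B1 : all (fun x => x < m) (B ++ [:: 1]).
Proof. by rewrite all_cat /= m_gt1 small. Qed.

Lemma filter_le_pivot : filter (fun x => x <= m) s = s1.
Proof. by rewrite merge_s (filter_merge_le (big rangeA) big_TC small_B1 (small rangeD)) -catA. Qed.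

Lemma filter_ge_pivot : filter (fun x => m <= x) s = hat (m - 1) s2.
Proof.
rewrite merge_s (filter_merge_ge (big rangeA) big_TC small_B1 (small rangeD)).
by rewrite /s2 /hat !map_cat /= map_cat /= add_1 add_l !unhatK.
Qed.

Lemma is_perm_pivot_left : is_perm m s1.
Proof.
by rewrite /is_perm -filter_le_pivot -(filter_iota_le (ltnW m_lt_n)); apply: perm_filter.
Qed.

Lemma is_perm_pivot_right : is_perm l s2.
Proof.
have range_m : 0 < m <= n by rewrite (ltnW m_gt1) ltnW.
have : perm_eq (hat (m - 1) s2) (hat (m - 1) (iota 1 l)).
  by rewrite -filter_ge_pivot hat_iota add_1 /l -(filter_iota_ge range_m); apply: perm_filter.
by move/(perm_map_inj (@addIn (m - 1))).
Qed.

Lemma odot_pivot_factors : s = odot s1 s2.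
Proof.
have l_gt1 : 1 < l by rewrite /l; lia.
rewrite (odot_shape l_gt1 rangeB (range_unhat rangeA) (range_unhat rangeT)
           is_perm_pivot_left is_perm_pivot_right).
by rewrite /hat !unhatK // -addnBA 1?ltnW // add_l.
Qed.

Lemma S_prec_pivot_factors :
  avoids1324 s -> [/\ primitive m s1, S_prec l (size T).+1 1 s2 & s = odot s1 s2].
Proof.
move=> av_s; split; last exact: odot_pivot_factors.
  apply: (@S_prec1_of_shape m B [::] D); first exact: is_perm_pivot_left.
  change (avoids1324 s1); rewrite -filter_le_pivot.
  by move/(contains1324_subseq (filter_subseq _ _)).
rewrite -(size_map (fun x => x - (m - 1)) T); apply: S_prec1_of_shape.
  exact: is_perm_pivot_right.
move/(contains1324_hat (m - 1)); rewrite -filter_ge_pivot.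
by move/(contains1324_subseq (filter_subseq _ _)).
Qed.

End Factorization.

Lemma S_prec_factor n k s : 1 < k -> S_prec n k 1 s ->
  exists m s1 s2, [/\ primitive m s1, S_prec (n - m + 1) k.-1 1 s2 & s = odot s1 s2].
Proof.
move=> k_gt1 S_s; have [perm_s av_s _ _] := S_s.
have [m [A [B [C [D [T [def_s size_T /andP [m_gt1 m_lt_n] rangeATC rangeBD]]]]]]] :=
  S_prec_pivot_shape k_gt1 S_s.
move: rangeATC rangeBD; rewrite !all_cat => /and3P [rangeA rangeT rangeC] /andP [rangeB rangeD].
rewrite {}def_s -{}size_T in perm_s av_s *.
by exists m; do 2!eexists; apply: S_prec_pivot_factors av_s.
Qed.

(** * Chains of primitives *)

Lemma size_S_prec n k a s : S_prec n k a s -> size s = n.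
Proof. by case=> perm_s _ _ _; rewrite (perm_size perm_s) size_iota. Qed.

Lemma primitive_gt1 m s : primitive m s -> 1 < m.
Proof. by case/(S_prec1_shape (ltn0Sn 0)). Qed.

Lemma odot_chain_cons s (ls : seq (seq nat)) :
  ls != [::] -> odot_chain (s :: ls) = odot s (odot_chain ls).
Proof. by case: ls. Qed.

Definition primitives (ls : seq (seq nat)) : Prop :=
  forall s, s \in ls -> exists2 m, 2 <= m & primitive m s.

Lemma primitives_cons (s : seq nat) (ls : seq (seq nat)) :
  primitives (s :: ls) -> (exists m, primitive m s) /\ primitives ls.
Proof.
move=> prim; split; first by have [m _ prim_s] := prim s (mem_head s ls); exists m.
by move=> t t_ls; apply: prim; rewrite inE t_ls orbT.
Qed.

Lemma S_prec_odot_chain (ls : seq (seq nat)) : ls != [::] -> primitives ls ->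
  exists n, S_prec n (size ls) 1 (odot_chain ls) /\ sumn (map size ls) = n + size ls - 1.
Proof.
elim: ls => // s ls IH _ /primitives_cons [[m prim_s] prim_ls].
have m_gt1 := primitive_gt1 prim_s; have size_s := size_S_prec prim_s.
have [-> | ls_neq0] := eqVneq ls [::].
  by exists m; split=> //=; rewrite size_s addn0 addnK.
have [n [S_ls sum_ls]] := IH ls_neq0 prim_ls.
have size_ls_gt0 : 0 < size ls by rewrite lt0n size_eq0.
have [S_odot _ _] := odot_spec prim_s size_ls_gt0 S_ls.
exists (n + m - 1); rewrite odot_chain_cons //; split=> //=.
by rewrite size_s sum_ls; lia.
Qed.

Lemma odot_chain_exists n k s : 0 < k -> S_prec n k 1 s ->
  exists ls, [/\ size ls = k, primitives ls & s = odot_chain ls].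
Proof.
elim: k n s => // k IH n s _; have [-> | k_gt0] := posnP k => S_s.
  exists [:: s]; split=> // t; rewrite inE => /eqP ->.
  by exists n => //; apply: primitive_gt1 S_s.
have [m [s1 [s2 [prim_s1 S_s2 ->]]]] := S_prec_factor (k_gt0 : 1 < k.+1) S_s.
have [ls [size_ls prim_ls def_s2]] := IH _ _ k_gt0 S_s2.
exists (s1 :: ls); split; first by rewrite /= size_ls.
  move=> t; rewrite inE => /predU1P [-> | /prim_ls //].
  by exists m; first exact: primitive_gt1 prim_s1.
by rewrite odot_chain_cons -?size_eq0 ?size_ls -?lt0n // def_s2.
Qed.

Lemma odot_chain_inj (ls ls' : seq (seq nat)) : size ls = size ls' ->
  primitives ls -> primitives ls' -> odot_chain ls = odot_chain ls' -> ls = ls'.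
Proof.
elim: ls ls' => [|s ls IH] [|s' ls'] // size_eq.
have {}size_eq : size ls = size ls' by case: size_eq.
move=> /primitives_cons [[m prim_s] prim_ls] /primitives_cons [[m' prim_s'] prim_ls'].
have [ls_nil | ls_neq0] := eqVneq ls [::].
  by move: size_eq; rewrite ls_nil => /esym /size0nil -> /= ->.
have ls'_neq0 : ls' != [::] by rewrite -size_eq0 -size_eq size_eq0.
rewrite !odot_chain_cons // => eq_chain.
have [N [S_ls _]] := S_prec_odot_chain ls_neq0 prim_ls.
have [N' [S_ls' _]] := S_prec_odot_chain ls'_neq0 prim_ls'.
have size_ls_gt0 : 0 < size ls by rewrite lt0n size_eq0.
have size_ls'_gt0 : 0 < size ls' by rewrite -size_eq.
have [_ lfactor_s rfactor_s] := odot_spec prim_s size_ls_gt0 S_ls.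
have [_ lfactor_s' rfactor_s'] := odot_spec prim_s' size_ls'_gt0 S_ls'.
have -> : s = s' by rewrite -lfactor_s eq_chain lfactor_s'.
by rewrite (IH ls') // -rfactor_s eq_chain rfactor_s'.
Qed.

Theorem corollary2p5 (k n : nat) (sigma : seq nat) :
  1 <= k -> k + 1 <= n -> S_prec n k 1 sigma ->
  (exists! l : seq (seq nat),
      [/\ size l = k,
          (forall s, s \in l -> exists2 m, 2 <= m & primitive m s)
        & sigma = odot_chain l])
  /\
  (forall l : seq (seq nat),
      [/\ size l = k,
          (forall s, s \in l -> exists2 m, 2 <= m & primitive m s)
        & sigma = odot_chain l] ->
      sumn (map size l) = n + k - 1).
Proof.
(* The bound [k + 1 <= n] already follows from [S_prec n k 1 sigma]. *)
move=> k_gt0 _ S_sigma; split.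
  have [ls [size_ls prim_ls def_sigma]] := odot_chain_exists k_gt0 S_sigma.
  exists ls; split=> // ls' [size_ls' prim_ls' def_sigma'].
  by apply: odot_chain_inj; rewrite ?size_ls ?size_ls' // -def_sigma.
move=> ls [size_ls prim_ls def_sigma].
have ls_neq0 : ls != [::] by rewrite -size_eq0 size_ls -lt0n.
have [N [S_N ->]] := S_prec_odot_chain ls_neq0 prim_ls.
by rewrite -def_sigma in S_N; rewrite -(size_S_prec S_N) (size_S_prec S_sigma) size_ls.
Qed.
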